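(* For all $n\ge 4$, there is no perfect lattice code in $\mathcal{A}(n,n-2,1)$.
   Context: For integers $n\ge 1$, $0\le t\le n$, $\ell\ge 1$, let $\mathcal{S}(n,t,\ell)=\{\mathcal{E}\in\mathbb{Z}^n: 0\le\varepsilon_i\le\ell \text{ for all } i,\ w_H(\mathcal{E})\le t\}$, where $w_H$ is the number of nonzero coordinates. A lattice here is the set of integer combinations of $n$ linearly independent vectors of $\mathbb{Z}^n$. $\mathcal{A}(n,t,\ell)$ is the set of lattices $\mathcal{L}\subseteq\mathbb{Z}^n$ such that the translates $X+\mathcal{S}(n,t,\ell)$, $X\in\mathcal{L}$, are pairwise disjoint. Such $\mathcal{L}$ is perfect if these translates also cover $\mathbb{Z}^n$. *)

From mathcomp Require Import all_boot all_order all_algebra.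

Import Order.TTheory GRing.Theory Num.Theory.
Local Open Scope ring_scope.

Definition Sball (n t l : nat) (e : 'rV[int]_n) : Prop :=
  (forall i : 'I_n, 0 <= e ord0 i <= l%:Z) /\
  (#|[set i : 'I_n | e ord0 i != 0]| <= t)%N.

Definition lattice_of (n : nat) (B : 'M[int]_n) (x : 'rV[int]_n) : Prop :=
  exists c : 'rV[int]_n, x = c *m B.

Definition lin_indep_rows (n : nat) (B : 'M[int]_n) : Prop :=
  row_free (map_mx (fun z : int => z%:~R : rat) B).

(* L in A(n,t,l): the translates X + S(n,t,l), X in L, are pairwise disjoint. *)
Definition packing (n t l : nat) (L : 'rV[int]_n -> Prop) : Prop :=
  forall X Y e1 e2 : 'rV[int]_n, L X -> L Y -> Sball n t l e1 -> Sball n t l e2 ->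
    X + e1 = Y + e2 -> X = Y.

Definition covering (n t l : nat) (L : 'rV[int]_n -> Prop) : Prop :=
  forall z : 'rV[int]_n, exists X e, L X /\ Sball n t l e /\ z = X + e.

Definition perfect (n t l : nat) (L : 'rV[int]_n -> Prop) : Prop :=
  packing n t l L /\ covering n t l L.

From mathcomp Require Import all_boot all_order all_algebra zify ring.
Import Order.TTheory GRing.Theory Num.Theory.
Local Open Scope ring_scope.
Set Implicit Arguments. Unset Strict Implicit.

(* Modulo a perfect lattice L every vector is congruent to exactly one
   indicator 1_A with |A| <= n - 2, and 1_(~C) = J - 1_C where J = 1_[n].
   Writing J = 1_B (mod L), one finds |B| <= 1, 2e_i = 1_B (mod L) whenever
   B <> {i}, and 2e_k = 0 (mod L) when B = {k}.  Hence for suitable i <> j,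
   1_{i,j} - 1_(~{i,j}) = 2e_i + 2e_j - J lies in L, although {i,j} and its
   complement are distinct sets of weight <= n - 2 when n >= 4. *)

Definition ind n (A : {set 'I_n}) : 'rV[int]_n :=
  \row_j (if j \in A then 1 else 0).

Ltac row_ring := apply/rowP => ?; rewrite !mxE; ring.

Lemma ind0 n : ind (set0 : {set 'I_n}) = 0.
Proof. by apply/rowP => j; rewrite !mxE inE. Qed.

Lemma indC n (A : {set 'I_n}) : ind (~: A) = ind [set: 'I_n] - ind A.
Proof. by apply/rowP => j; rewrite !mxE !inE; case: (j \in A). Qed.

Lemma ind_setD1 n (A : {set 'I_n}) i :
  i \in A -> ind A = ind [set i] + ind (A :\ i).
Proof.
move=> iA; apply/rowP => j; rewrite !mxE !inE.
by case: eqVneq => [->|]; rewrite ?iA //=; case: (j \in A).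
Qed.

Lemma ind_set2 n (i j : 'I_n) :
  i != j -> ind [set i; j] = ind [set i] + ind [set j].
Proof.
move=> ij; apply/rowP => l; rewrite !mxE !inE.
by case: eqVneq => [->|]; rewrite ?(negbTE ij) //=; case: (l == j).
Qed.

Lemma ind_inj n : injective (@ind n).
Proof.
move=> A B eAB; apply/setP => j.
by have := congr1 (fun v : 'rV[int]_n => v ord0 j) eAB; rewrite /= !mxE; do 2 case: (_ \in _).
Qed.

Lemma ord_other n (k : 'I_n) : (1 < n)%N -> exists i : 'I_n, i != k.
Proof.
move=> n1; have /card_gt0P [i] : (0 < #|[set~ k]|)%N by rewrite cardsC1 card_ord; lia.
by rewrite !inE => ik; exists i.
Qed.

Section PerfectIndicatorCode.

Variables (n : nat) (L : 'rV[int]_n -> Prop).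
Hypothesis n_ge4 : (4 <= n)%N.
Hypothesis L0 : L 0.
Hypothesis LB : forall x y, L x -> L y -> L (x - y).
Hypothesis pack : forall A C : {set 'I_n},
  (#|A| <= n - 2)%N -> (#|C| <= n - 2)%N -> L (ind A - ind C) -> A = C.
Hypothesis cover : forall z, exists2 A : {set 'I_n}, (#|A| <= n - 2)%N & L (z - ind A).

Local Notation J := (ind [set: 'I_n]).

Lemma memN x : L x -> L (- x).
Proof. by move=> Lx; rewrite -sub0r; apply: LB. Qed.

Lemma memD x y : L x -> L y -> L (x + y).
Proof. by move=> Lx Ly; rewrite -[y]opprK; apply/LB/memN. Qed.

Lemma ind_mem_eq0 (A : {set 'I_n}) : (#|A| <= n - 2)%N -> L (ind A) -> A = set0.
Proof. by move=> hA LA; apply: pack; rewrite ?cards0 // ind0 subr0. Qed.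

Lemma ones_rep : exists2 B : {set 'I_n}, (#|B| <= 1)%N & L (J - ind B).
Proof.
have [B hB LJB] := cover J; exists B => //.
rewrite leqNgt; apply/negP => B2.
have cBC : #|~: B| = (n - #|B|)%N by rewrite cardsCs setCK card_ord.
have BC0 : ~: B = set0 by apply: ind_mem_eq0; rewrite ?indC //; lia.
by move: cBC; rewrite BC0 cards0; lia.
Qed.

Lemma double_rep (B : {set 'I_n}) i : (#|B| <= 1)%N -> L (J - ind B) ->
  B = [set i] \/ L (ind B - ind [set i] *+ 2).
Proof.
move=> hB LJB; have [A hA LA] := cover (ind B - ind [set i]).
have A1 : (#|A| <= 1)%N.
  rewrite leqNgt; apply/negP => A2.
  have cAC : #|~: A| = (n - #|A|)%N by rewrite cardsCs setCK card_ord.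
  have LAC : L (ind (~: A) - ind [set i]).
    by apply: (eq_ind _ L (memD LJB LA)); rewrite indC; row_ring.
  have AC : ~: A = [set i] by apply: pack; rewrite ?cards1 //; lia.
  by move: cAC; rewrite AC cards1; lia.
have [/eqP|/eqP/cards1P [j Aj]] : #|A| = 0%N \/ #|A| = 1%N by lia.
  rewrite cards_eq0 => /eqP A0; left; apply: pack; rewrite ?cards1 //; try lia.
  by move: LA; rewrite A0 ind0 subr0.
have [ji|ij] := eqVneq j i.
  by right; apply: (eq_ind _ L LA); rewrite Aj ji; row_ring.
have {ij} ij : i != j by rewrite eq_sym.
have Bij : B = [set i; j].
  apply: pack; rewrite ?cards2 ?ij //; try lia.
  by apply: (eq_ind _ L LA); rewrite Aj ind_set2 //; row_ring.
by move: hB; rewrite Bij cards2 ij.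
Qed.

Lemma double_self k : L (J - ind [set k]) -> L (ind [set k] *+ 2).
Proof.
move=> LJk; have [P hP LP] := cover (ind [set k] *+ 2).
case kP: (k \in P).
  have kPk : [set k] = P :\ k.
    apply: pack; rewrite ?cards1 //; try lia.
      exact: leq_trans (subset_leq_card (subD1set P k)) hP.
    by apply: (eq_ind _ L LP); rewrite (ind_setD1 kP); row_ring.
  by move: (set11 k); rewrite kPk !inE eqxx.
have [P0|[j jP]] := set_0Vmem P; first by move: LP; rewrite P0 ind0 subr0.
have kj : k != j by apply: contraFneq kP => ->.
have [/set1_inj /eqP|Lkj] := double_rep j (eq_leq (cards1 k)) LJk; first by rewrite (negbTE kj).
have kjP : [set k; j] = P :\ j.
  apply: pack; rewrite ?cards2 ?kj //; try lia.
    exact: leq_trans (subset_leq_card (subD1set P j)) hP.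
  by apply: (eq_ind _ L (LB LP Lkj)); rewrite (ind_setD1 jP) ind_set2 //; row_ring.
by move: (setU1r k (set11 j)); rewrite kjP !inE eqxx.
Qed.

Lemma no_double_pair i j : i != j -> ~ L (ind [set i] *+ 2 + ind [set j] *+ 2 - J).
Proof.
move=> ij Lij.
have cC : #|~: [set i; j]| = (n - 2)%N by rewrite cardsCs setCK card_ord cards2 ij.
have eC : [set i; j] = ~: [set i; j].
  apply: pack; rewrite ?cC ?cards2 ?ij //; try lia.
  by apply: (eq_ind _ L Lij); rewrite indC ind_set2 //; row_ring.
by move: (setU11 i [set j]); rewrite [in X in X -> _]eC !inE eqxx.
Qed.

Lemma no_perfect_indicator_code : False.
Proof.
have [B hB LJB] := ones_rep.
have [/eqP|/eqP/cards1P [k Bk]] : #|B| = 0%N \/ #|B| = 1%N by lia.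
  rewrite cards_eq0 => /eqP B0.
  have L2 i : L (ind [set i] *+ 2).
    have [/setP/(_ i)|] := double_rep i hB LJB; first by rewrite B0 !inE eqxx.
    by rewrite B0 ind0 sub0r => /memN; rewrite opprK.
  have n0 : (0 < n)%N by lia.
  have [i ij] := ord_other (Ordinal n0) ltac:(lia).
  apply: (no_double_pair ij); apply: LB (memD (L2 _) (L2 _)) _.
  by move: LJB; rewrite B0 ind0 subr0.
rewrite {}Bk in LJB hB.
have [i ik] := ord_other k ltac:(lia).
have [/set1_inj /eqP|Lki] := double_rep i hB LJB; first by rewrite eq_sym (negbTE ik).
apply: (no_double_pair ik).
by apply: (eq_ind _ L (LB (LB (double_self LJB) Lki) LJB)); row_ring.
Qed.

End PerfectIndicatorCode.

Lemma Sball_ind n t (A : {set 'I_n}) : (#|A| <= t)%N -> Sball n t 1 (ind A).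
Proof.
move=> hA; split=> [i|]; first by rewrite mxE; case: (i \in A).
suff -> : [set i : 'I_n | ind A ord0 i != 0] = A by [].
by apply/setP => i; rewrite inE mxE; case: (i \in A).
Qed.

Lemma Sball1E n t (e : 'rV[int]_n) :
  Sball n t 1 e -> exists2 A : {set 'I_n}, (#|A| <= t)%N & e = ind A.
Proof.
move=> [e01 he]; exists [set i | e ord0 i != 0] => //.
apply/rowP => j; rewrite mxE inE; have := e01 j.
have -> : (0 : 'I_1) = ord0 by apply: val_inj.
by case: eqP => [->|] //= => e0 /andP [? ?]; lia.
Qed.

Section LatticeCode.

Variables (n : nat) (B : 'M[int]_n).

Lemma lattice_of0 : lattice_of n B 0.
Proof. by exists 0; rewrite mul0mx. Qed.

Lemma lattice_ofB x y : lattice_of n B x -> lattice_of n B y -> lattice_of n B (x - y).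
Proof. by move=> [c ->] [d ->]; exists (c - d); rewrite mulmxBl. Qed.

Lemma packing_ind t (A C : {set 'I_n}) : packing n t 1 (lattice_of n B) ->
  (#|A| <= t)%N -> (#|C| <= t)%N -> lattice_of n B (ind A - ind C) -> A = C.
Proof.
move=> pk hA hC LAC; apply: ind_inj; apply/eqP; rewrite -subr_eq0; apply/eqP.
by apply: (pk _ _ _ _ LAC lattice_of0 (Sball_ind hC) (Sball_ind hA)); rewrite add0r subrK.
Qed.

Lemma covering_ind t z : covering n t 1 (lattice_of n B) ->
  exists2 A : {set 'I_n}, (#|A| <= t)%N & lattice_of n B (z - ind A).
Proof.
move=> cv; have [X [e [LX [/Sball1E [A hA ->] ->]]]] := cv z.
by exists A; rewrite ?addrK.
Qed.

End LatticeCode.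

Theorem mainTheorem6 :
  forall (n : nat), (4 <= n)%N ->
  forall B : 'M[int]_n, lin_indep_rows n B ->
  ~ perfect n (n - 2) 1 ((lattice_of n B)).
Proof.
move=> n n4 B _ [pk cv].
apply: (no_perfect_indicator_code n4 (lattice_of0 B) (@lattice_ofB n B)).
- by move=> A C; apply: packing_ind.
- by move=> z; apply: covering_ind.
Qed.
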